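(* Let $G$ be a finite simple graph (with no restriction on its clique number). If $G$ is claw-free and every block of $G$ is a closed graph, then $G$ is strongly chordal and claw-free.
   Context: A strong elimination order of $G$ is an ordering $v_1,\dots,v_n$ of its vertices that is a perfect elimination order (whenever $v_iv_j,v_iv_k\in E(G)$ with $i<j,k$, then $v_jv_k\in E(G)$) and such that whenever $v_iv_k, v_kv_j, v_iv_\ell\in E(G)$ with $i<k<\ell$ and $i<j$, then $v_jv_\ell\in E(G)$; $G$ is strongly chordal if it has one. The claw is $K_{1,3}$. A closed order is an ordering $v_1,\dots,v_n$ such that whenever $v_iv_j,v_iv_k\in E(G)$ and either $i<j,k$ or $i>j,k$, then $v_jv_k\in E(G)$; $G$ is closed if it has one. A block is a maximal subgraph without cut vertices (2-connected). *)

(* A vertex ordering v_1,...,v_n of a vertex set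
   is a sequence s that is a permutation of its elements; the position of
   vertex x is index x s. *)
From mathcomp Require Import all_boot.
Set Implicit Arguments. Unset Strict Implicit. Unset Printing Implicit Defensive.

Section Graphs.
Variables (T : finType) (e : rel T).

Definition simple_graph : Prop := symmetric e /\ irreflexive e.

Definition peo (s : seq T) : Prop :=
  forall x y z, x \in s -> y \in s -> z \in s ->
    index x s < index y s -> index x s < index z s ->
    e x y -> e x z -> y != z -> e y z.

Definition strong_elim_order (s : seq T) : Prop :=
  peo s /\
  forall vi vj vk vl, vi \in s -> vj \in s -> vk \in s -> vl \in s ->
    index vi s < index vk s -> index vk s < index vl s ->
    index vi s < index vj s ->
    e vi vk -> e vk vj -> e vi vl -> vj != vl -> e vj vl.

Definition strongly_chordal : Prop :=
  exists s : seq T, perm_eq s (enum T) /\ strong_elim_order s.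

Definition claw_free : Prop :=
  ~ exists a b c d : T,
      [/\ uniq [:: a; b; c; d], e a b, e a c & e a d] /\
      [/\ ~~ e b c, ~~ e b d & ~~ e c d].

Definition closed_order_on (B : {set T}) (s : seq T) : Prop :=
  perm_eq s (enum B) /\
  forall x y z, x \in s -> y \in s -> z \in s ->
    e x y -> e x z -> y != z ->
    (index x s < index y s /\ index x s < index z s \/
     index y s < index x s /\ index z s < index x s) ->
    e y z.

Definition closed_on (B : {set T}) : Prop := exists s, closed_order_on B s.

Definition induced_rel (B : {set T}) : rel T :=
  [rel x y | [&& x \in B, y \in B & e x y]].

Definition connected_on (B : {set T}) : Prop :=
  forall x y, x \in B -> y \in B -> connect (induced_rel B) x y.

Definition nonsep_on (B : {set T}) : Prop :=
  B != set0 /\ connected_on B /\ forall v, v \in B -> connected_on (B :\ v).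

(* a block: vertex set of a maximal connected subgraph without cut vertices
   (blocks are induced subgraphs) *)
Definition is_block (B : {set T}) : Prop :=
  nonsep_on B /\ forall B' : {set T}, B \subset B' -> nonsep_on B' -> B' = B.

End Graphs.

From mathcomp Require Import all_boot zify.
Set Implicit Arguments. Unset Strict Implicit. Unset Printing Implicit Defensive.

(* Vertex orders are handled as injective ranks [k : T -> nat].  We show, by
   induction on a vertex set [S], that [G[S]] has a strong ranking and, more
   precisely, one that ranks any given simplicial vertex of [G[S]] last.  If
   [S] is disconnected, rank one component and then the rest.  If [S] is
   2-connected, it lies in a block, whose closed order restricts to a closed
   ranking of [S]; closed rankings are strong, and by the umbrella property of
   connected closed orders they can be rearranged to end at a simplicial
   vertex.  If [S] has a cut vertex [v], then [S] is the union of two smaller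
   sets meeting in [v] with no edge between them elsewhere, and claw-freeness
   makes [v] simplicial in both; the vertices of the first set other than [v],
   ordered by a ranking of that set ending at [v], followed by a ranking of
   the second set, then form a strong ranking. *)

Section Ranks.
Variables (T : finType) (e : rel T).
Hypotheses (esym : symmetric e) (eirr : irreflexive e).
Implicit Types (S A B C P Q : {set T}) (k ka kb : T -> nat).

Lemma edge_neq x y : e x y -> x != y.
Proof. by apply: contraTneq => ->; rewrite eirr. Qed.

Definition closed_rank S k :=
  {in S &, injective k} /\
  forall x y z, x \in S -> y \in S -> z \in S -> e x y -> e x z -> y != z ->
    (k x < k y /\ k x < k z \/ k y < k x /\ k z < k x) -> e y z.

(* A strong elimination order, read off the ranks: [x, y, z, w] play the
   roles of [v_i, v_k, v_l, v_j]; the case [w = y] is the perfect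
   elimination condition. *)
Definition strong_rank_at S k x :=
  forall y z w, y \in S -> z \in S -> w \in S ->
    k x < k y -> k y < k z -> k x < k w -> e x y -> e x z ->
    (w = y \/ e y w) -> w = z \/ e z w.

Definition strong_rank S k :=
  {in S &, injective k} /\ {in S, forall x, strong_rank_at S k x}.

Lemma closed_rankS S S' k : S' \subset S -> closed_rank S k -> closed_rank S' k.
Proof.
move=> /subsetP sub [inj cl]; split; first exact: sub_in2 inj.
by move=> x y z xS yS zS; apply: cl; apply: sub.
Qed.

Lemma closed_rank_rev S k N :
  {in S, forall x, k x <= N} -> closed_rank S k -> closed_rank S (fun x => N - k x).
Proof.
move=> kN [inj cl]; split.
  by move=> x y xS yS h; apply: inj => //; move: (kN x xS) (kN y yS); lia.
move=> x y z xS yS zS exy exz yz h; apply: (cl x) => //.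
by move: (kN x xS) (kN y yS) (kN z zS); lia.
Qed.

Lemma closed_rank_strong S k : closed_rank S k -> strong_rank S k.
Proof.
move=> [inj cl]; split=> // x xS y z w yS zS wS kxy kyz kxw exy exz hw.
have yz : y != z by apply: contraTneq _ kyz => ->; rewrite ltnn.
have eyz : e y z by apply: (cl x) => //; left; lia.
case: hw => [->|eyw]; first by right; rewrite esym.
have [->|wz] := eqVneq w z; first by left.
right; case: (ltngtP (k y) (k w)) => hyw.
- apply: (cl y) => //; last by left; split.
  by rewrite eq_sym.
- have exw : e x w.
    rewrite esym in exy; apply: (cl y) => //; last by right.
    by apply: contraTneq _ kxw => ->; rewrite ltnn.
  by rewrite esym; apply: (cl x) => //; left; lia.
- by move: eyw; rewrite (inj y w yS wS hyw) eirr.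
Qed.

Definition cat_rank P ka kb x :=
  if x \in P then ka x else (\max_(y in P) ka y).+1 + kb x.

Lemma cat_rank_in P ka kb x : x \in P -> cat_rank P ka kb x = ka x.
Proof. by rewrite /cat_rank => ->. Qed.

Lemma cat_rank_in_out P ka kb x y :
  x \in P -> y \notin P -> cat_rank P ka kb x < cat_rank P ka kb y.
Proof.
move=> xP yP; rewrite /cat_rank xP (negbTE yP) ltn_addr // ltnS.
exact: (leq_bigmax_cond (F := ka)).
Qed.

Lemma cat_rank_outE P ka kb x y : x \notin P -> y \notin P ->
  (cat_rank P ka kb x < cat_rank P ka kb y) = (kb x < kb y).
Proof. by move=> xP yP; rewrite /cat_rank (negbTE xP) (negbTE yP) ltn_add2l. Qed.

Lemma cat_rank_inj P Q ka kb :
  {in P &, injective ka} -> {in Q &, injective kb} ->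
  {in P :|: Q &, injective (cat_rank P ka kb)}.
Proof.
move=> injP injQ x y; rewrite !inE.
have [xP _|xP /= xQ] := boolP (x \in P); have [yP _|yP /= yQ] := boolP (y \in P).
- by rewrite !cat_rank_in //; apply: injP.
- by move=> h; move: (cat_rank_in_out ka kb xP yP); rewrite h ltnn.
- by move=> h; move: (cat_rank_in_out ka kb yP xP); rewrite h ltnn.
by rewrite /cat_rank (negbTE xP) (negbTE yP) => /addnI; apply: injQ.
Qed.

Lemma cat_rank_last P Q ka kb r :
  r \in Q -> r \notin P -> {in Q :\ r, forall x, kb x < kb r} ->
  {in (P :|: Q) :\ r, forall x, cat_rank P ka kb x < cat_rank P ka kb r}.
Proof.
move=> rQ rP rlast x /setD1P[xr]; have [xP _|xP] := boolP (x \in P).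
  exact: cat_rank_in_out.
by rewrite inE (negbTE xP) /= => xQ; rewrite cat_rank_outE // rlast //; apply/setD1P.
Qed.

Lemma strong_rank_at_cat_out S B P ka kb x :
  {subset S :\: P <= B} -> x \notin P -> strong_rank_at B kb x ->
  strong_rank_at S (cat_rank P ka kb) x.
Proof.
move=> SPB xP st y z w yS zS wS kxy kyz kxw.
have later t : cat_rank P ka kb x < cat_rank P ka kb t -> t \notin P.
  by apply: contraTN => tP; rewrite -leqNgt ltnW // cat_rank_in_out.
have [yP wP] := (later y kxy, later w kxw); have zP := later z (ltn_trans kxy kyz).
by apply: st; rewrite ?SPB ?inE ?yP ?zP ?wP // -(cat_rank_outE (P := P) ka).
Qed.

Lemma strong_rank_cat A B ka kb :
  {in A :&: B &, forall d1 d2, d1 = d2} ->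
  {in A :\: B & B :\: A, forall a b, ~~ e a b} ->
  {in A :\: B & A :&: B, forall a d, ka a < ka d} ->
  strong_rank A ka -> strong_rank B kb ->
  strong_rank (A :|: B) (cat_rank (A :\: B) ka kb).
Proof.
move=> D1 noedge Dlast [injA stA] [injB stB].
set P := A :\: B; set k := cat_rank P ka kb.
have PA y : y \in P -> y \in A by case/setDP.
have inD y : y \in A -> y \notin P -> y \in A :&: B.
  by rewrite !inE => ->; rewrite andbT negbK.
have inB y : y \in A :|: B -> y \notin P -> y \in B.
  by rewrite !inE; case: (y \in A); case: (y \in B).
have before y z : y \in P -> k z < k y -> z \in P.
  by move=> yP; apply: contraTT => zP; rewrite -leqNgt ltnW // cat_rank_in_out.
split.
  have -> : A :|: B = P :|: B.
    by apply/setP => x; rewrite !inE; case: (x \in A); case: (x \in B).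
  by apply: cat_rank_inj => //; apply: sub_in2 injA.
move=> x xAB; have [xP|xP] := boolP (x \in P); last first.
  by apply: strong_rank_at_cat_out xP (stB x (inB x xAB xP)) => y /setDP[/inB].
have cmp a b : a \in A -> b \in A -> k a < k b -> ka a < ka b.
  move=> aA bA; have [aP|aP] := boolP (a \in P); have [bP|bP] := boolP (b \in P).
  - by rewrite /k !cat_rank_in.
  - by move=> _; apply: Dlast; rewrite ?inD.
  - by move/(before _ _ bP); rewrite (negbTE aP).
  - by rewrite (D1 a b) ?inD ?ltnn.
move=> y z w yAB zAB wAB kxy kyz kxw exy exz hw.
have out t : t \in A :|: B -> e x t -> t \in A.
  move=> tAB; apply: contraTT => tA; apply: noedge; rewrite // inE tA.
  by move: tAB; rewrite inE (negbTE tA).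
have [yA zA] := (out y yAB exy, out z zAB exz).
have [wA|wA] := boolP (w \in A).
  by apply: (stA x (PA x xP) y z w) => //; apply: cmp => //; apply: PA.
case: hw => [wy|eyw]; first by move: wA; rewrite wy yA.
have yP : y \notin P.
  apply: contraTN eyw => yP; apply: noedge; rewrite // inE (negbTE wA).
  by move: wAB; rewrite inE (negbTE wA).
have zP : z \notin P by apply: contra yP => /before; apply.
by move: kyz; rewrite (D1 y z) ?inD ?ltnn.
Qed.

Definition simplicial S r :=
  {in S &, forall a b, a != b -> e r a -> e r b -> e a b}.

Lemma simplicialS S S' r : S' \subset S -> simplicial S r -> simplicial S' r.
Proof. by move=> /subsetP sub sr; apply: sub_in2 sr. Qed.

Definition connectedb S := [forall x in S, forall y in S, connect (induced_rel e S) x y].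

Lemma connectedbP S : reflect (connected_on e S) (connectedb S).
Proof.
apply: (iffP forall_inP) => [con x y xS yS | con x xS].
  by move/forall_inP: (con x xS); apply.
by apply/forall_inP => y; apply: con.
Qed.

Definition component S x := [set z in S | connect (induced_rel e S) x z].

Lemma component_sub S x : component S x \subset S.
Proof. by apply/subsetP => z; rewrite inE => /andP[]. Qed.

Lemma mem_component S x : x \in S -> x \in component S x.
Proof. by move=> xS; rewrite inE xS connect0. Qed.

Lemma component_edge S x a b :
  a \in component S x -> b \in S -> e a b -> b \in component S x.
Proof.
rewrite !inE => /andP[aS xa] bS eab; rewrite bS (connect_trans xa) //.
by apply: connect1; rewrite /induced_rel /= aS bS.
Qed.

Lemma component_noedge S x a b :
  a \in component S x -> b \in S :\: component S x -> ~~ e a b.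
Proof. by move=> aC /setDP[bS]; apply: contraNN; apply: component_edge. Qed.

Lemma connectedbPn S :
  ~~ connectedb S -> exists x y, [/\ x \in S, y \in S & y \notin component S x].
Proof.
rewrite negb_forall_in => /exists_inP[x xS]; rewrite negb_forall_in.
by case/exists_inP => y yS nxy; exists x, y; rewrite inE yS.
Qed.

Lemma connected_on_crossing S (X : {pred T}) x y :
  connected_on e S -> x \in S -> y \in S -> x \in X -> y \notin X ->
  exists a b, [/\ a \in S, b \in S, a \in X, b \notin X & e a b].
Proof.
move=> con xS yS xX yX.
have [/existsP[a /existsP[b /and5P[? ? ? ? ?]]]|none] :=
  boolP [exists a, exists b, [&& a \in S, b \in S, a \in X, b \notin X & e a b]].
  by exists a, b.
have cross a b : a \in S -> b \in S -> e a b -> a \in X -> b \in X.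
  move=> aS bS eab aX; apply: contraNT none => bX.
  by apply/existsP; exists a; apply/existsP; exists b; rewrite aS bS aX bX.
have clX : closed (induced_rel e S) X.
  move=> a b /and3P[aS bS eab]; apply/idP/idP; first exact: cross.
  by apply: cross; rewrite // esym.
by move: (closed_connect clX (con x y xS yS)); rewrite xX (negbTE yX).
Qed.

Lemma connected_on_setD1 S u :
  connected_on e S -> u \in S -> simplicial S u -> connected_on e (S :\ u).
Proof.
move=> con uS su; apply/connectedbP; apply: contraT => /connectedbPn[x [y [xSu ySu yX]]].
set X := component (S :\ u) x.
have [xu xS] : x != u /\ x \in S by apply/andP; rewrite -in_setD1.
have [yu yS] : y != u /\ y \in S by apply/andP; rewrite -in_setD1.
have XS : {subset X <= S} by move=> z /(subsetP (component_sub _ _)); rewrite inE => /andP[].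
have exit a b : a \in X -> b \in S -> b \notin X -> e a b -> b = u.
  move=> aX bS bX eab; apply/eqP; apply: contraNT bX => bu.
  by apply: component_edge aX _ eab; rewrite !inE bS andbT.
have [a [b [_ bS aX bX eab]]] := connected_on_crossing con xS yS (mem_component xSu) yX.
have bu := exit a b aX bS bX eab; subst b.
have xXu : x \in [predU X & pred1 u] by rewrite inE mem_component.
have yXu : y \notin [predU X & pred1 u] by apply/norP; split.
have [a' [b' [_ b'S a'X b'X ea'b']]] := connected_on_crossing con xS yS xXu yXu.
move: a'X b'X => /orP[a'X|/eqP a'u] /norP[b'X b'u].
  by move/eqP: b'u => /(_ (exit a' b' a'X b'S b'X ea'b')).
subst a'; have ab' : a != b' by apply: contraNneq b'X => <-.
have eab' : e a b' by apply: su => //; [exact: XS | rewrite esym].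
by move/eqP: b'u => /(_ (exit a b' aX b'S b'X eab')).
Qed.

Definition umbrella S k :=
  forall p m q, p \in S -> m \in S -> q \in S ->
    k p < k m -> k m < k q -> e p q -> e p m /\ e m q.

Lemma umbrella_rev S k N :
  {in S, forall x, k x <= N} -> umbrella S k -> umbrella S (fun x => N - k x).
Proof.
move=> kN U p m q pS mS qS kpm kmq epq.
have [eqm emp] : e q m /\ e m p.
  by apply: U; rewrite // 1?esym //; move: (kN p pS) (kN m mS) (kN q qS) kpm kmq; lia.
by rewrite esym emp esym eqm.
Qed.

Lemma exists_rank_last S k p :
  {in S &, injective k} -> p \in S -> exists2 u, u \in S & {in S :\ u, forall x, k x < k u}.
Proof.
move=> inj pS; case: (@arg_maxnP T p (mem S) k pS) => u uS umax; exists u => // x.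
rewrite in_setD1 => /andP[xu xS]; have kxu : k x <= k u := umax x xS.
rewrite ltn_neqAle kxu andbT.
by apply: contra xu => /eqP/inj ->.
Qed.

Lemma closed_rank_last_simplicial S k u :
  closed_rank S k -> u \in S -> {in S :\ u, forall x, k x < k u} -> simplicial S u.
Proof.
move=> [_ cl] uS ulast a b aS bS ab eua eub; apply: (cl u) => //; right.
by split; apply: ulast; rewrite in_setD1 eq_sym edge_neq.
Qed.

Lemma closed_rank_last_neighbour S k u m :
  closed_rank S k -> connected_on e S -> u \in S ->
  {in S :\ u, forall x, k x < k u} -> umbrella (S :\ u) k ->
  m \in S -> m != u -> exists2 c, c \in S /\ e u c & k m <= k c.
Proof.
move=> [inj cl] con uS ulast U mS mu.
have [/exists_inP[c cS /andP[euc kmc]]|none] :=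
  boolP [exists c in S, e u c && (k m <= k c)]; first by exists c.
pose X := [pred w | (w == u) || [exists c in S, e u c && (k w <= k c)]].
have uX : u \in X by rewrite inE eqxx.
have mX : m \notin X by rewrite inE negb_or mu.
have [a [b [aS bS aX bX eab]]] := connected_on_crossing con uS mS uX mX.
move: bX; rewrite inE negb_or negb_exists_in => /andP[bu /forall_inP above].
have [au|au] := eqVneq a u; first by move: (above b bS); rewrite -au eab leqnn.
move: aX; rewrite inE (negbTE au) => /exists_inP[c cS /andP[euc kac]].
have kcb : k c < k b by move: (above c cS); rewrite euc ltnNge.
have inSu x : x \in S -> x != u -> x \in S :\ u by move=> xS xu; rewrite in_setD1 xu.
have cu : c != u by rewrite eq_sym edge_neq.
have ecb : e c b.
  have [<-//|ac] := eqVneq a c.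
  have kac' : k a < k c by rewrite ltn_neqAle kac andbT; apply: contra ac => /eqP/inj ->.
  by case: (U a c b); rewrite ?inSu.
have eub : e u b.
  rewrite esym; apply: (cl c) => //; first by rewrite esym.
  by left; split=> //; apply: ulast; rewrite inSu.
by move: (above b bS); rewrite eub leqnn.
Qed.

Lemma closed_rank_umbrella S k : closed_rank S k -> connected_on e S -> umbrella S k.
Proof.
have [n] := ubnP #|S|; elim: n S => // n IH S ltSn ck con p m q pS mS qS kpm kmq epq.
have [u uS ulast] := exists_rank_last ck.1 pS.
have su := closed_rank_last_simplicial ck uS ulast.
have inSu x : x \in S -> x != u -> x \in S :\ u by move=> xS xu; rewrite in_setD1 xu.
have U : umbrella (S :\ u) k.
  apply: IH; first by move: ltSn; rewrite (cardsD1 u S) uS.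
    exact: closed_rankS (subD1set S u) ck.
  exact: connected_on_setD1.
have [qu|qu] := eqVneq q u; last first.
  have ltu := ulast q (inSu q qS qu).
  have neu x : k x < k q -> x != u.
    by move=> kxq; apply: contraTneq kxq => ->; rewrite -leqNgt ltnW.
  have [pu mu] := (neu p (ltn_trans kpm kmq), neu m kmq).
  by apply: U; rewrite ?inSu.
subst q; have mu : m != u by apply: contraTneq kmq => ->; rewrite ltnn.
have pm : p != m by apply: contraTneq kpm => ->; rewrite ltnn.
suff emu : e m u by split=> //; apply: su; rewrite // esym.
have [c [cS euc] kmc] := closed_rank_last_neighbour ck con uS ulast U mS mu.
have [<-|cm] := eqVneq c m; first by rewrite esym.
have cu : c != u by rewrite eq_sym edge_neq.
have kmc' : k m < k c by rewrite ltn_neqAle kmc andbT; apply: contra cm => /eqP/ck.1 ->.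
have pc : p != c by apply: contraTneq (ltn_trans kpm kmc') => ->; rewrite ltnn.
have epc : e p c by apply: su; rewrite // esym.
have [epm _] := U p m c (inSu p pS (edge_neq epq)) (inSu m mS mu)
  (inSu c cS cu) kpm kmc' epc.
apply: (ck.2 p) => //; left; split=> //.
by apply: ulast; rewrite inSu // edge_neq.
Qed.

Lemma umbrella_nonneighbour_edge S k r x y :
  {in S &, injective k} -> umbrella S k -> r \in S -> x \in S -> y \in S ->
  ~~ e r x -> k x < k r -> e x y -> k y < k r.
Proof.
move=> inj U rS xS yS nrx kxr exy; case: (ltngtP (k y) (k r)) => // kry.
  by have [exr _] := U x r y xS rS yS kxr kry exy; move: nrx; rewrite esym exr.
by move: nrx exy; rewrite (inj _ _ yS rS kry) esym => /negbTE->.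
Qed.

Lemma umbrella_nonneighbour_before S k r x a :
  {in S &, injective k} -> umbrella S k -> r \in S -> x \in S -> a \in S ->
  ~~ e r x -> k x < k r -> e r a -> k a < k r -> k x < k a.
Proof.
move=> inj U rS xS aS nrx kxr era kar; case: (ltngtP (k x) (k a)) => // kax.
  have ear : e a r by rewrite esym.
  by have [_ exr] := U a x r aS xS rS kax kxr ear; move: nrx; rewrite esym exr.
by move: nrx; rewrite (inj _ _ xS aS kax) era.
Qed.

(* The non-neighbours of [r] ranked before [r], then those ranked after [r]
   in reverse order, then the neighbours of [r] in the same fashion, then [r]
   itself (ranks are assumed to be below [N]). *)
Definition last_rank k r N x :=
  if x == r then 4 * N + 2
  else if e r x then (if k x < k r then 2 * N + 1 + k x else 3 * N + 1 + (N - k x))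
  else (if k x < k r then k x else N + (N - k x)).

Lemma last_rank_lt k r N x :
  k x < N -> x != r -> last_rank k r N x < last_rank k r N r.
Proof. by move=> kxN xr; rewrite /last_rank eqxx (negbTE xr); do 2 case: ifP; lia. Qed.

Lemma last_rank_neighbour k r N x t :
  e r x -> k t < N -> last_rank k r N x < last_rank k r N t -> t = r \/ e r t.
Proof.
move=> erx ktN; have [->|tr] := eqVneq t r; first by left.
rewrite /last_rank (negbTE tr) eq_sym (negbTE (edge_neq erx)) erx.
case: (e r t); first by right.
by move=> h; exfalso; move: h ktN; do 2 case: ifP; lia.
Qed.

Lemma last_rank_before k r N a b :
  k r < N -> a != r -> b != r -> k a < k r -> k b < k r ->
  (~~ e r a -> e r b -> k a < k b) -> last_rank k r N a < last_rank k r N b -> k a < k b.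
Proof.
move=> krN ar br kar kbr hab; rewrite /last_rank (negbTE ar) (negbTE br) kar kbr.
by case: (e r a) hab; case: (e r b) => /= hab; lia.
Qed.

Lemma last_rank_after k r N a b :
  k a < N -> k b < N -> a != r -> b != r -> k r < k a -> k r < k b ->
  (~~ e r a -> e r b -> k b < k a) -> last_rank k r N a < last_rank k r N b -> k b < k a.
Proof.
move=> kaN kbN ar br kar kbr hab; rewrite /last_rank (negbTE ar) (negbTE br).
rewrite !ltnNge (ltnW kar) (ltnW kbr) /=.
by case: (e r a) hab; case: (e r b) => /= hab; lia.
Qed.

Lemma last_rank_inj S k r N :
  {in S, forall x, k x < N} -> {in S &, injective k} -> {in S &, injective (last_rank k r N)}.
Proof.
move=> kN inj x y xS yS; have [->|xr] := eqVneq x r; have [->|yr] := eqVneq y r => //.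
- by move=> h; move: (last_rank_lt (kN y yS) yr); rewrite h ltnn.
- by move=> h; move: (last_rank_lt (kN x xS) xr); rewrite h ltnn.
move=> h; apply: inj => //; move: h (kN x xS) (kN y yS).
by rewrite /last_rank (negbTE xr) (negbTE yr); do 4 case: ifP; lia.
Qed.

Lemma strong_rank_at_transfer S k k' x :
  strong_rank_at S k x ->
  {in S, forall t, k' x < k' t -> k x < k t} ->
  {in S &, forall y z, e x y -> e x z -> k' y < k' z -> k y < k z} ->
  strong_rank_at S k' x.
Proof.
move=> st later mono y z w yS zS wS kxy kyz kxw exy exz.
by apply: st; rewrite // ?later // mono.
Qed.

Lemma strong_rank_at_simplicial S k r x :
  simplicial S r -> {in S, forall t, k x < k t -> t = r \/ e r t} -> strong_rank_at S k x.
Proof.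
move=> sr near y z w yS zS wS kxy kyz kxw _ _ _.
have [<-|wz] := eqVneq w z; [by left | right].
case: (near z zS (ltn_trans kxy kyz)) => [zr|erz]; case: (near w wS kxw) => [wr|erw].
- by move: wz; rewrite zr wr eqxx.
- by rewrite zr.
- by rewrite wr esym.
- by apply: sr; rewrite // eq_sym.
Qed.

Lemma last_rank_strong_before S k r N x :
  closed_rank S k -> umbrella S k -> {in S, forall y, k y < N} ->
  r \in S -> x \in S -> ~~ e r x -> k x < k r ->
  strong_rank_at S (last_rank k r N) x.
Proof.
move=> ck U kN rS xS nrx kxr; have [inj _] := ck.
have xr : x != r by apply: contraTneq kxr => ->; rewrite ltnn.
apply: (strong_rank_at_transfer ((closed_rank_strong ck).2 x xS)).
  move=> t tS; have [->//|tr] := eqVneq t r.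
  case: (ltngtP (k t) (k r)) => [ktr|krt|/inj ktr]; last by move: tr; rewrite ktr ?eqxx.
    apply: last_rank_before; rewrite ?kN // => _ ert.
    exact: (umbrella_nonneighbour_before inj U rS xS tS).
  by move=> _; apply: ltn_trans kxr krt.
move=> y z yS zS exy exz.
have kyr := umbrella_nonneighbour_edge inj U rS xS yS nrx kxr exy.
have kzr := umbrella_nonneighbour_edge inj U rS xS zS nrx kxr exz.
have [yr zr] : y != r /\ z != r.
  by split; [move: kyr | move: kzr]; apply: contraTneq => ->; rewrite ltnn.
apply: last_rank_before; rewrite ?kN // => nry erz.
exact: (umbrella_nonneighbour_before inj U rS yS zS).
Qed.

Lemma last_rank_strong_after S k r N x :
  closed_rank S k -> umbrella S k -> {in S, forall y, k y < N} ->
  r \in S -> x \in S -> ~~ e r x -> k r < k x ->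
  strong_rank_at S (last_rank k r N) x.
Proof.
move=> ck U kN rS xS nrx krx; have [inj _] := ck.
have kN' : {in S, forall y, k y <= N} by move=> y /kN /ltnW.
have rev a b : a \in S -> (N - k a < N - k b) = (k b < k a).
  by move=> aS; rewrite ltn_sub2lE // kN'.
have U' := umbrella_rev kN' U; have ck' := closed_rank_rev kN' ck; have [inj' _] := ck'.
have xr : x != r by apply: contraTneq krx => ->; rewrite ltnn.
have kxr' : N - k x < N - k r by rewrite rev.
apply: (strong_rank_at_transfer ((closed_rank_strong ck').2 x xS)).
  move=> t tS; rewrite rev //; have [->//|tr] := eqVneq t r.
  case: (ltngtP (k t) (k r)) => [ktr|krt|/inj ktr]; last by move: tr; rewrite ktr ?eqxx.
    by move=> _; apply: ltn_trans ktr krx.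
  apply: last_rank_after; rewrite ?kN // => _ ert; rewrite -rev //.
  by apply: (umbrella_nonneighbour_before inj' U' rS xS tS); rewrite ?rev.
move=> y z yS zS exy exz; rewrite rev //.
have kry : k r < k y by rewrite -rev // (umbrella_nonneighbour_edge inj' U' rS xS yS).
have krz : k r < k z by rewrite -rev // (umbrella_nonneighbour_edge inj' U' rS xS zS).
have [yr zr] : y != r /\ z != r.
  by split; [move: kry | move: krz]; apply: contraTneq => ->; rewrite ltnn.
apply: last_rank_after; rewrite ?kN // => nry erz; rewrite -rev //.
by apply: (umbrella_nonneighbour_before inj' U' rS yS zS); rewrite ?rev.
Qed.

Lemma closed_rank_simplicial_last S k r :
  closed_rank S k -> connected_on e S -> r \in S -> simplicial S r ->
  exists2 k', strong_rank S k' & {in S :\ r, forall x, k' x < k' r}.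
Proof.
move=> ck con rS sr; have [inj _] := ck; have U := closed_rank_umbrella ck con.
set N := (\max_(y in S) k y).+1.
have kN : {in S, forall y, k y < N} by move=> y yS; rewrite ltnS (leq_bigmax_cond (F := k)).
exists (last_rank k r N); last first.
  by move=> x /setD1P[xr xS]; apply: last_rank_lt; rewrite ?kN.
split=> [|x xS]; first exact: last_rank_inj.
have [->|xr] := eqVneq x r.
  apply: (strong_rank_at_simplicial sr) => t tS; have [->|tr] := eqVneq t r; first by left.
  by rewrite ltnNge (ltnW (last_rank_lt (kN t tS) tr)).
have [erx|nrx] := boolP (e r x).
  by apply: (strong_rank_at_simplicial sr) => t tS; apply: last_rank_neighbour; rewrite ?kN.
case: (ltngtP (k x) (k r)) => [kxr|krx|/inj xr']; last by rewrite xr' ?eqxx in xr.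
  exact: last_rank_strong_before.
exact: last_rank_strong_after.
Qed.

Definition strong_rankable S :=
  (exists k, strong_rank S k) /\
  forall r, r \in S -> simplicial S r ->
    exists2 k, strong_rank S k & {in S :\ r, forall x, k x < k r}.

Lemma strong_rankable_meet_last A B :
  {in A :&: B &, forall d1 d2, d1 = d2} -> {in A :&: B, forall v, simplicial A v} ->
  strong_rankable A ->
  exists2 ka, strong_rank A ka & {in A :\: B & A :&: B, forall a d, ka a < ka d}.
Proof.
move=> D1 sA [[k0 st0] last]; case: (set_0Vmem (A :&: B)) => [->|[v vD]].
  by exists k0 => // a d _; rewrite inE.
have [vA vB] := setIP vD.
have [ka st klast] := last v vA (sA v vD); exists ka => // a d /setDP[aA aB] dD.
rewrite (D1 d v dD vD); apply: klast; apply/setD1P; split=> //.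
by apply: contraNneq aB => ->.
Qed.

Lemma strong_rankable_union_last A B r :
  {in A :&: B &, forall d1 d2, d1 = d2} ->
  {in A :\: B & B :\: A, forall a b, ~~ e a b} ->
  {in A :&: B, forall v, simplicial A v} ->
  strong_rankable A -> strong_rankable B -> r \in B -> simplicial (A :|: B) r ->
  exists2 k, strong_rank (A :|: B) k & {in (A :|: B) :\ r, forall x, k x < k r}.
Proof.
move=> D1 noedge sA rA [_ rB] rBr sr.
have [ka sta kalast] := strong_rankable_meet_last D1 sA rA.
have [kb stb kblast] := rB r rBr (simplicialS (subsetUr A B) sr).
exists (cat_rank (A :\: B) ka kb); first exact: strong_rank_cat.
have -> : A :|: B = A :\: B :|: B.
  by apply/setP => x; rewrite !inE; case: (x \in A); case: (x \in B).
by apply: cat_rank_last; rewrite // inE rBr.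
Qed.

Lemma strong_rankable_union A B :
  {in A :&: B &, forall d1 d2, d1 = d2} ->
  {in A :\: B & B :\: A, forall a b, ~~ e a b} ->
  {in A :&: B, forall v, simplicial A v /\ simplicial B v} ->
  strong_rankable A -> strong_rankable B -> strong_rankable (A :|: B).
Proof.
move=> D1 noedge sAB rA rB.
have sA : {in A :&: B, forall v, simplicial A v} by move=> v /sAB[].
have sB : {in B :&: A, forall v, simplicial B v} by move=> v; rewrite setIC => /sAB[].
have D1' : {in B :&: A &, forall d1 d2, d1 = d2} by rewrite setIC.
have noedge' : {in B :\: A & A :\: B, forall b a, ~~ e b a}.
  by move=> b a bP aP; rewrite esym noedge.
split=> [|r]; last first.
  rewrite inE => /orP[rA'|rB']; last exact: strong_rankable_union_last.
  by rewrite setUC => sr; apply: strong_rankable_union_last.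
have [ka sta kalast] := strong_rankable_meet_last D1 sA rA.
have [[kb stb] _] := rB.
by exists (cat_rank (A :\: B) ka kb); apply: strong_rank_cat.
Qed.

Lemma claw_free_edge v a b d :
  claw_free e -> a != b -> a != d -> b != d ->
  e v a -> e v b -> e v d -> ~~ e a d -> ~~ e b d -> e a b.
Proof.
move=> cf ab ad bd eva evb evd nad nbd; apply: contraT => nab; case: cf.
exists v, a, b, d; split; split=> //.
by rewrite /= !inE !negb_or ab ad bd !edge_neq.
Qed.

Lemma claw_free_separator_simplicial S C v c d :
  claw_free e -> {in C & S :\: C, forall a b, b != v -> ~~ e a b} ->
  c \in C -> e v c -> d \in S :\: C -> d != v -> e v d ->
  simplicial (v |: C) v /\ simplicial (S :\: C) v.
Proof.
move=> cf noedge cC evc dSC dv evd; split=> a b aX bX ab eva evb.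
  have inC t : t \in v |: C -> e v t -> t \in C.
    by rewrite !inE eq_sym => /orP[/eqP<-|//]; rewrite eirr.
  have [aC bC] := (inC a aX eva, inC b bX evb).
  have neqd t : t \in C -> t != d by move=> tC; apply: contraTneq dSC => <-; rewrite inE tC.
  by apply: (claw_free_edge cf ab (neqd a aC) (neqd b bC) eva evb evd); apply: noedge.
have neqc t : t \in S :\: C -> t != c.
  by move=> tSC; apply: contraTneq tSC => ->; rewrite inE cC.
apply: (claw_free_edge cf ab (neqc a aX) (neqc b bX) eva evb evc); rewrite esym noedge //.
all: by rewrite eq_sym edge_neq.
Qed.

Lemma strong_rankable_split S x :
  strong_rankable (component S x) -> strong_rankable (S :\: component S x) ->
  strong_rankable S.
Proof.
set C := component S x => rC rD.
have CS := subsetP (component_sub S x).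
have -> : S = C :|: (S :\: C).
  apply/setP => z; rewrite in_setU in_setD.
  by case: (boolP (z \in C)) => [/CS->|]; rewrite ?andbT.
have CD : C :&: (S :\: C) = set0.
  by apply/setP => z; rewrite in_setI in_setD in_set0; case: (z \in C).
apply: strong_rankable_union; rewrite ?CD //.
- by move=> a b; rewrite in_set0.
- by move=> a b /setDP[aC _] /setDP[bSC _]; apply: component_noedge aC bSC.
- by move=> w; rewrite in_set0.
Qed.

Lemma cut_vertex_neighbours S v x y :
  connected_on e S -> x \in S :\ v -> y \in S :\ v -> y \notin component (S :\ v) x ->
  (exists2 c, c \in component (S :\ v) x & e v c) /\
  exists2 d, d \in S :\: component (S :\ v) x & d != v /\ e v d.
Proof.
set C := component (S :\ v) x => con xSv ySv yC.
have [[_ xS] [yv yS]] := (setD1P xSv, setD1P ySv).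
have exit a b : a \in C -> b \in S -> b \notin C -> e a b -> b = v.
  move=> aC bS bC eab; apply/eqP; apply: contraTT eab => bv.
  by apply: component_noedge aC _; rewrite in_setD bC; apply/setD1P.
split.
  have [a [b [_ bS aC bC eab]]] := connected_on_crossing con xS yS (mem_component xSv) yC.
  by exists a; rewrite // esym -(exit a b).
have xX : x \in [predU C & pred1 v] by rewrite inE mem_component.
have yX : y \notin [predU C & pred1 v] by apply/norP; split.
have [a [b [aS bS /orP[aC|/eqP av] /norP[bC bv] eab]]] :=
  connected_on_crossing con xS yS xX yX.
  by move/eqP: bv => /(_ (exit a b aC bS bC eab)).
by exists b; [rewrite inE bC | split; [exact: bv | rewrite -av]].
Qed.

Lemma strong_rankable_cut S v x y :
  claw_free e -> connected_on e S -> v \in S ->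
  x \in S :\ v -> y \in S :\ v -> y \notin component (S :\ v) x ->
  strong_rankable (v |: component (S :\ v) x) ->
  strong_rankable (S :\: component (S :\ v) x) -> strong_rankable S.
Proof.
move=> cf con vS xSv ySv yC r1 r2.
have [[c cC evc] [d dSC [dv evd]]] := cut_vertex_neighbours con xSv ySv yC.
set C := component (S :\ v) x in cC dSC r1 r2 *.
have CSv := subsetP (component_sub (S :\ v) x).
have CS z : z \in C -> z \in S by move/CSv/setD1P=> [].
have vC : v \notin C by apply/negP => /CSv /setD1P[/eqP vv _]; apply: vv.
have noedge : {in C & S :\: C, forall a b, b != v -> ~~ e a b}.
  move=> a b aC /setDP[bS bC] bv; apply: component_noedge aC _.
  by rewrite in_setD bC; apply/setD1P.
have [sv1 sv2] := claw_free_separator_simplicial cf noedge cC evc dSC dv evd.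
have meet : (v |: C) :&: (S :\: C) = [set v].
  apply/setP => z; rewrite in_setI in_setU1 in_setD in_set1.
  by have [->|zv] := eqVneq z v; [rewrite vC vS | case: (z \in C)].
have -> : S = (v |: C) :|: (S :\: C).
  apply/setP => z; rewrite in_setU in_setU1 in_setD.
  have [->|_] := eqVneq z v; first by rewrite vS.
  by case: (boolP (z \in C)) => [/CS->|]; rewrite ?andbT.
apply: strong_rankable_union; rewrite ?meet //.
- by move=> d1 d2 /set1P-> /set1P->.
- move=> a b /setDP[/setU1P[->|aC] aSC] /setDP[bSC bX].
    by move: aSC; rewrite in_setD vC vS.
  by apply: noedge => //; apply: contraNneq bX => ->; apply: setU11.
- by move=> w /set1P->.
Qed.

Hypothesis clawfree : claw_free e.
Hypothesis nonsep_closed : forall S, nonsep_on e S -> exists k, closed_rank S k.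

Lemma strong_rankable_nonsep S : nonsep_on e S -> strong_rankable S.
Proof.
move=> ns; have [k ck] := nonsep_closed ns; have [_ [con _]] := ns.
split; first by exists k; apply: closed_rank_strong.
by move=> r rS sr; apply: (closed_rank_simplicial_last ck con).
Qed.

Lemma strong_rankable_all S : strong_rankable S.
Proof.
have [n] := ubnP #|S|; elim: n S => // n IH S ltSn.
have IHS S' z : S' \subset S -> z \in S -> z \notin S' -> strong_rankable S'.
  move=> sub zS zS'; apply: IH; rewrite -ltnS (leq_trans _ ltSn) // ltnS.
  by apply: proper_card; apply/properP; split=> //; exists z.
case: (set_0Vmem S) => [->|[x0 x0S]].
  by split=> [|r]; [exists (fun=> 0); split=> x; rewrite inE | rewrite inE].
have [con|/connectedbPn[x [y [xS yS yC]]]] := boolP (connectedb S); last first.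
  apply: (strong_rankable_split (x := x)); first exact: IHS (component_sub S x) yS yC.
  by apply: (IHS _ x); rewrite ?subsetDl // in_setD mem_component.
have [/exists_inP[v vS /connectedbPn[x [y [xSv ySv yC]]]]|cut] :=
  boolP [exists v in S, ~~ connectedb (S :\ v)].
  apply: (strong_rankable_cut clawfree (connectedbP _ con) vS xSv ySv yC).
  - have [yv yS] := setD1P ySv; apply: (IHS _ y _ yS).
      by rewrite subUset sub1set vS (subset_trans (component_sub _ _)) ?subD1set.
    by rewrite in_setU1 negb_or yC andbT.
  - have [_ xS] := setD1P xSv.
    by apply: (IHS _ x _ xS); rewrite ?subsetDl // in_setD mem_component.
apply: strong_rankable_nonsep; split; first by apply/set0Pn; exists x0.
split=> [|v vS]; first exact/connectedbP.
by apply/connectedbP; move: cut; rewrite negb_exists_in => /forall_inP/(_ v vS)/negbNE.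
Qed.

End Ranks.

Section Blocks.
Variables (T : finType) (e : rel T).
Implicit Types (S B : {set T}).

Definition nonsepb S :=
  [&& S != set0, connectedb e S & [forall v in S, connectedb e (S :\ v)]].

Lemma nonsepbP S : reflect (nonsep_on e S) (nonsepb S).
Proof.
apply: (iffP and3P) => [[S0 /connectedbP con /forall_inP cut] | [S0 [con cut]]].
  by split=> //; split=> // v /cut /connectedbP.
by split=> //; [apply/connectedbP | apply/forall_inP => v /cut /connectedbP].
Qed.

Lemma nonsep_sub_block S : nonsep_on e S -> exists2 B : {set T}, S \subset B & is_block e B.
Proof.
move=> /nonsepbP nsS.
have [|B /andP[sSB nsB] Bmax] :=
  @arg_maxnP _ S [pred B : {set T} | (S \subset B) && nonsepb B] (fun B => #|B|).
  by rewrite /= subxx nsS.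
exists B => //; split=> [|B' sBB' /nonsepbP nsB']; first exact/nonsepbP.
apply/eqP; rewrite eq_sym eqEcard sBB' /=.
by apply: Bmax; rewrite /= (subset_trans sSB sBB') nsB'.
Qed.

Lemma closed_order_rank B s : closed_order_on e B s -> closed_rank e B (index^~ s).
Proof.
move=> [ps cl]; have inS x : x \in B -> x \in s by rewrite (perm_mem ps) mem_enum.
split=> [x y xB yB|x y z xB yB zB]; first exact: index_inj (inS x xB) (inS y yB).
by apply: cl; apply: inS.
Qed.

Lemma nonsep_closed_rank :
  (forall B, is_block e B -> closed_on e B) ->
  forall S, nonsep_on e S -> exists k, closed_rank e S k.
Proof.
move=> hbl S ns; have [B sSB bB] := nonsep_sub_block ns; have [s hs] := hbl B bB.
by exists (index^~ s); apply: closed_rankS sSB (closed_order_rank hs).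
Qed.

Lemma strong_rank_strongly_chordal k :
  symmetric e -> strong_rank e [set: T] k -> strongly_chordal e.
Proof.
move=> esym [inj st]; set s := sort (fun a b => k a <= k b) (enum T).
have inj' : injective k by move=> x y /inj; apply; rewrite inE.
have st' x y z w : k x < k y -> k y < k z -> k x < k w -> e x y -> e x z ->
    w = y \/ e y w -> w = z \/ e z w.
  by apply: (st x); rewrite inE.
have lt a b : a \in s -> b \in s -> index a s < index b s -> k a < k b.
  have tr : transitive (fun a b => k a <= k b) by move=> ? ? ?; apply: leq_trans.
  have srt : sorted (fun a b => k a <= k b) s.
    by apply: sort_sorted => ? ?; apply: leq_total.
  move=> aS bS ab; rewrite ltn_neqAle (sorted_ltn_index tr srt) // andbT.
  by apply: contraTneq ab => /inj' ->; rewrite ltnn.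
exists s; split; first by rewrite perm_sort perm_refl.
split=> [x y z xs ys zs xy xz exy exz yz | vi vj vk vl iS jS kS lS ik kl ij eik ekj eil jl].
  wlog kyz : y z ys zs xy xz exy exz yz / k y < k z.
    move=> wlog; case: (ltngtP (k y) (k z)) => [|kzy|/inj' kyz]; first exact: wlog.
      by rewrite esym; apply: wlog; rewrite // eq_sym.
    by rewrite kyz eqxx in yz.
  have kxy := lt x y xs ys xy.
  case: (st' x y z y kxy kyz kxy exy exz (or_introl erefl)) => [zy|]; last by rewrite esym.
  by rewrite zy eqxx in yz.
have [jl'|] := st' vi vk vl vj (lt _ _ iS kS ik) (lt _ _ kS lS kl) (lt _ _ iS jS ij)
  eik eil (or_intror ekj); last by rewrite esym.
by rewrite jl' eqxx in jl.
Qed.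

End Blocks.

Theorem mainTheorem16 (T : finType) (e : rel T) :
  simple_graph e ->
  claw_free e ->
  (forall B : {set T}, is_block e B -> closed_on e B) ->
  strongly_chordal e /\ claw_free e.
Proof.
move=> [esym eirr] cf hbl; split=> //.
have [[k stk] _] := strong_rankable_all esym eirr cf (nonsep_closed_rank hbl) [set: T].
exact: strong_rank_strongly_chordal esym stk.
Qed.
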